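(* Let $T>0$ and $\epsilon>0$, and let $\mathcal{R}$ consist of $M$ independently generated random RR sets. For any node $u$ with $I_u\ge T$, with probability at least $1-\exp\!\left(-\frac{M\epsilon^2 n}{8T}\right)$ we have $n\,\mathcal{F_R}(u)\ge T-\frac{\epsilon n}{2}$.
   Context: $G=\langle V,E,w\rangle$ is a network with $n=|V|$ under the Linear Threshold or Independent Cascade model (given by its live-edge distribution: LT — each node $v$ independently selects at most one incoming live edge, $(u,v)$ with probability $w_{uv}/W_v$ where $W_v=w_v+\sum_{u}w_{uv}$ includes a self-weight $w_v$; IC — each edge $(u,v)$ is live independently with probability $w_{uv}$). The influence spread $I(S)$ is the expected number of nodes reachable from $S$ via live edges, and $I_u=I(\{u\})$. A random RR set is the set of nodes that can reach a uniformly random node $v\in V$ via live edges in a freshly sampled live-edge graph. $\mathcal{F_R}(u)$ is the fraction of RR sets in $\mathcal{R}$ that contain $u$. *)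

From HB Require Import structures.
From mathcomp Require Import all_boot all_order all_algebra.
From mathcomp Require Import all_classical all_reals all_analysis.
Set Implicit Arguments. Unset Strict Implicit. Unset Printing Implicit Defensive.
Import Order.TTheory GRing.Theory Num.Theory.
Local Open Scope ring_scope.

Section LiveEdge.
Variables (R : realType) (V : finType).

(* A live-edge model: a finite sample space Om of live-edge outcomes with a
   probability mass function P, and for each outcome the live-edge relation
   (live om x y  <=>  edge (x,y) is live). *)
Variables (Om : finType) (P : Om -> R) (live : Om -> rel V).

Definition reached (om : Om) (S : {set V}) : {set V} :=
  [set v | [exists s in S, connect (live om) s v]].

Definition influence (S : {set V}) : R :=
  \sum_(om : Om) P om * (#|reached om S|)%:R.

Definition influence1 (u : V) : R := influence [set u].

Definition RRset (om : Om) (v : V) : {set V} :=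
  [set x | connect (live om) x v].

(* M independent random RR sets: each sample is an independent pair
   (uniform root v, fresh live-edge outcome om). *)
Definition sample_prob (M : nat) (s : {ffun 'I_M -> V * Om}) : R :=
  \prod_(i < M) ((#|V|%:R)^-1 * P (s i).2).

Definition frac (M : nat) (u : V) (s : {ffun 'I_M -> V * Om}) : R :=
  (#|[set i : 'I_M | u \in RRset (s i).2 (s i).1]|)%:R / M%:R.

Definition prob_samples (M : nat) (E : pred {ffun 'I_M -> V * Om}) : R :=
  \sum_(s | E s) sample_prob s.

Definition rr_lower_tail_claim (T eps : R) (M : nat) (u : V) : Prop :=
  T <= influence1 u ->
  1 - expR (- ((M%:R * eps ^+ 2 * (#|V|)%:R) / (8 * T)))
    <= prob_samples
         (fun s : {ffun 'I_M -> V * Om} =>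
            T - eps * (#|V|)%:R / 2 <= (#|V|)%:R * frac u s).

End LiveEdge.

Section Models.
Variables (R : realType) (V : finType).

(* Independent Cascade: each (u,v) live independently with prob w u v
   (non-edges have weight 0). Outcome = set of live pairs. *)
Definition IC_space := {ffun (V * V)%type -> bool}.
Definition IC_prob (w : V -> V -> R) (L : IC_space) : R :=
  \prod_(e : (V * V)%type) (if L e then w e.1 e.2 else 1 - w e.1 e.2).
Definition IC_live (L : IC_space) : rel V := fun x y => L (x, y).

(* Linear Threshold (live-edge form): each node v independently selects at
   most one incoming live edge: (u,v) w.p. w u v / W v, none w.p. wself v / W v,
   with W v = wself v + sum_u w u v. *)
Definition LT_space := {ffun V -> option V}.
Definition LT_W (w : V -> V -> R) (wself : V -> R) (v : V) : R :=
  wself v + \sum_(x : V) w x v.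
Definition LT_prob (w : V -> V -> R) (wself : V -> R) (c : LT_space) : R :=
  \prod_(v : V) (match c v with
                 | Some x => w x v / LT_W w wself v
                 | None => wself v / LT_W w wself v
                 end).
Definition LT_live (c : LT_space) : rel V := fun x y => c y == Some x.

End Models.

(* The number of RR sets containing [u] is a sum of [M] independent Bernoulli
   variables of mean [p = I_u / n >= T / n].  By the exponential Markov
   inequality, [P(sum < M t) <= (E exp (lam (t - Y)))^M] for [lam > 0], and
   [exp (-lam) <= 1 - lam + lam^2/2] bounds the factor by
   [exp (lam t - p lam + p lam^2 / 2)].  With [t = a - d], [a = T / n],
   [d = eps / 2] and [lam = d / a] the exponent is at most [- M d^2 / (2 a)],
   i.e. [- M eps^2 n / (8 T)]. *)
From Pilot Require Import Defs.
From HB Require Import structures.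
From mathcomp Require Import all_boot all_order all_algebra.
From mathcomp Require Import all_classical all_reals all_analysis.
From mathcomp Require Import ring lra.
Import Order.TTheory GRing.Theory Num.Theory.
Local Open Scope ring_scope.

Lemma expR_ge_taylor2 {R : realType} (x : R) :
  0 <= x -> 1 + x + x ^+ 2 / 2 <= expR x.
Proof.
move=> x0.
pose f : R -> R := (@expR R - id - (fun y => 2^-1 * y) * id)%R.
have fE z : f z = expR z - z - z ^+ 2 / 2.
  rewrite /f; change (expR z - z - 2^-1 * z * z = expR z - z - z ^+ 2 / 2).
  by rewrite expr2; field.
have df (y : R) : is_derive y 1 f (expR y - 1 - y).
  apply: is_derive_eq.
  change (expR y - 1 - (2^-1 * y * 1 + y * (2^-1 * 1)) = expR y - 1 - y).
  by field.
have : f 0 <= f x.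
  apply: (@ger0_derive1_ndecr R f 0 x) => //.
  - by move=> z _; rewrite derive1E derive_val; have := expR_ge1Dx z; lra.
  - by apply: derivable_within_continuous => z _; case: (df z).
rewrite !fE expR0; lra.
Qed.

Lemma expRN_le_taylor2 {R : realType} (x : R) :
  0 <= x -> expR (- x) <= 1 - x + x ^+ 2 / 2.
Proof.
move=> x0; rewrite expRN.
have := expR_ge_taylor2 x x0; have := expR_gt0 x.
set e := expR x => e0 he.
have eV : e * e^-1 = 1 by rewrite mulfV // gt_eqF.
have eV0 : 0 < e^-1 by rewrite invr_gt0.
nra.
Qed.

Section BernoulliLowerTail.
Variables (R : realType) (X : finType) (q : X -> R) (b : pred X).
Hypothesis q_ge0 : forall x, 0 <= q x.
Hypothesis q_sum1 : \sum_x q x = 1.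

Let p : R := \sum_x q x * (b x)%:R.

Lemma sum_prod_pmf (M : nat) :
  \sum_(s : {ffun 'I_M -> X}) \prod_(i < M) q (s i) = 1.
Proof.
rewrite -(bigA_distr_bigA (fun (i : 'I_M) x => q x)).
by under eq_bigr do rewrite q_sum1; rewrite prodr_const expr1n.
Qed.

Lemma mgf_indicator_le (lam t : R) : 0 <= lam ->
  \sum_x q x * expR (lam * t - lam * (b x)%:R)
    <= expR (lam * t - p * lam + p * lam ^+ 2 / 2).
Proof.
move=> lam0.
have termE x : q x * expR (lam * t - lam * (b x)%:R)
    = expR (lam * t) * (q x + q x * (b x)%:R * (expR (- lam) - 1)).
  by case: (b x); rewrite /= ?mulr1 ?mulr0 ?subr0 ?expRD; ring.
under eq_bigr do rewrite termE.
rewrite -mulr_sumr big_split /= q_sum1 -mulr_suml -/p.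
have -> : lam * t - p * lam + p * lam ^+ 2 / 2
    = lam * t + p * (- lam + lam ^+ 2 / 2) by ring.
rewrite expRD ler_wpM2l ?expR_ge0 //; apply: le_trans (expR_ge1Dx _) _.
have p0 : 0 <= p by apply: sumr_ge0 => x _; rewrite mulr_ge0 ?ler0n.
by rewrite ler_expR ler_wpM2l //; have := expRN_le_taylor2 lam lam0; lra.
Qed.

Lemma markov_prod_indicator (M : nat) (lam t : R) : 0 <= lam ->
  \sum_(s : {ffun 'I_M -> X} | \sum_(i < M) (b (s i))%:R < M%:R * t)
      \prod_(i < M) q (s i)
    <= (\sum_x q x * expR (lam * t - lam * (b x)%:R)) ^+ M.
Proof.
move=> lam0; set G := fun x => q x * expR (lam * t - lam * (b x)%:R).
have -> : (\sum_x G x) ^+ M = \sum_(s : {ffun 'I_M -> X}) \prod_(i < M) G (s i).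
  by rewrite -(bigA_distr_bigA (fun (i : 'I_M) x => G x)) prodr_const card_ord.
have prodG s : \prod_(i < M) G (s i)
    = \prod_(i < M) q (s i)
      * expR (lam * (M%:R * t - \sum_(i < M) (b (s i))%:R)).
  rewrite /G big_split /= -expR_sum sumrB sumr_const -mulr_sumr.
  by rewrite card_ord mulrBr mulr_natl mulrnAr.
under [leRHS]eq_bigr do rewrite prodG.
rewrite [leRHS](bigID (fun s : {ffun 'I_M -> X} =>
  \sum_(i < M) (b (s i))%:R < M%:R * t)) /=.
have prod_ge0 s : 0 <= \prod_(i < M) q (s i) by exact: prodr_ge0.
apply: ler_wpDr; first by apply: sumr_ge0 => s _; rewrite mulr_ge0 ?expR_ge0.
apply: ler_sum => s hs; rewrite -[leLHS]mulr1 ler_wpM2l //.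
by rewrite -[leLHS]expR0 ler_expR mulr_ge0 // subr_ge0 ltW.
Qed.

Lemma bernoulli_lower_tail (M : nat) (a d : R) :
  0 < a -> 0 < d -> a <= p ->
  \sum_(s : {ffun 'I_M -> X} | \sum_(i < M) (b (s i))%:R < M%:R * (a - d))
      \prod_(i < M) q (s i)
    <= expR (- (M%:R * d ^+ 2 / (2 * a))).
Proof.
move=> a0 d0 ap; have M0 : 0 <= M%:R :> R by exact: ler0n.
have [ad | da] := ltrP d a; last first.
  rewrite big_pred0 ?expR_ge0 // => s; apply/negbTE; rewrite -leNgt.
  apply: le_trans (sumr_ge0 _ (fun i _ => ler0n _ _)).
  by rewrite mulr_ge0_le0 // subr_le0.
set lam := d / a.
have lam0 : 0 < lam by rewrite divr_gt0.
have lam1 : lam < 1 by rewrite ltr_pdivrMr // mul1r.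
set z := lam * (a - d) - p * lam + p * lam ^+ 2 / 2.
have zE : z = - (d ^+ 2 / (2 * a)) - lam * (1 - lam / 2) * (p - a).
  by rewrite /z /lam; field; rewrite gt_eqF.
have z_le : z <= - (d ^+ 2 / (2 * a)).
  rewrite zE lerBlDr lerDl mulr_ge0 ?subr_ge0 // mulr_ge0 ?ltW //; lra.
apply: le_trans (markov_prod_indicator M lam (a - d) (ltW lam0)) _.
have mgf_ge0 : 0 <= \sum_x q x * expR (lam * (a - d) - lam * (b x)%:R).
  by apply: sumr_ge0 => x _; rewrite mulr_ge0 ?expR_ge0.
apply: le_trans (lerXn2r M _ _ (mgf_indicator_le lam (a - d) (ltW lam0))) _;
  rewrite ?nnegrE ?expR_ge0 // -expRM_natl ler_expR.
have -> : - (M%:R * d ^+ 2 / (2 * a)) = M%:R * - (d ^+ 2 / (2 * a)).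
  by rewrite mulrN !mulrA.
exact: ler_wpM2l.
Qed.

End BernoulliLowerTail.

Section RRSampling.
Variables (R : realType) (V Om : finType) (P : Om -> R) (live : Om -> rel V).
Hypothesis P_ge0 : forall om, 0 <= P om.
Hypothesis P_sum1 : \sum_om P om = 1.
Variable u : V.

Let n : R := #|V|%:R.

Lemma n_gt0 : 0 < n.
Proof. by rewrite ltr0n; apply/card_gt0P; exists u. Qed.

Definition rr_pmf (x : V * Om) : R := n^-1 * P x.2.

Definition rr_hit (x : V * Om) : bool := u \in RRset live x.2 x.1.

Lemma rr_pmf_ge0 x : 0 <= rr_pmf x.
Proof. by rewrite mulr_ge0 // invr_ge0 ltW // n_gt0. Qed.

Lemma rr_pmf_sum1 : \sum_x rr_pmf x = 1.
Proof.
rewrite -(pair_bigA _ (fun _ om => n^-1 * P om)) /=.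
under eq_bigr do rewrite -mulr_sumr P_sum1 mulr1.
by rewrite sumr_const -mulr_natr mulVf // gt_eqF // n_gt0.
Qed.

Lemma reached1 om : reached live om [set u] = [set v | u \in RRset live om v].
Proof.
apply/setP => v; rewrite !inE.
apply/existsP/idP => [[s /andP[/set1P -> //]] | uv].
by exists u; rewrite set11.
Qed.

Lemma rr_hit_mean :
  \sum_x rr_pmf x * (rr_hit x)%:R = influence1 P live u / n.
Proof.
rewrite /rr_pmf /rr_hit.
rewrite -(pair_bigA _ (fun v om => n^-1 * P om * (u \in RRset live om v)%:R)).
rewrite exchange_big /= mulr_suml; apply: eq_bigr => om _.
rewrite reached1 -sum1_card natr_sum mulr_sumr mulr_suml [RHS]big_mkcond /=.
apply: eq_bigr => v _; rewrite inE.
by case: (u \in RRset live om v); rewrite /= ?mulr1 ?mulr0 ?mul0r // mulrC.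
Qed.

Lemma frac_count (M : nat) (s : {ffun 'I_M -> V * Om}) :
  Defs.frac R live u s = (\sum_(i < M) (rr_hit (s i))%:R) / M%:R.
Proof.
rewrite /Defs.frac -sum1_card natr_sum big_mkcond /=; congr (_ / _).
by apply: eq_bigr => i _; rewrite inE /rr_hit; case: (u \in _).
Qed.

Lemma rr_lower_tail (T eps : R) (M : nat) :
  0 < T -> 0 < eps -> (0 < M)%N -> rr_lower_tail_claim P live T eps M u.
Proof.
move=> T0 eps0 M0; rewrite /rr_lower_tail_claim /prob_samples -/n => hI.
have n0 := n_gt0; have M0' : 0 < M%:R :> R by rewrite ltr0n.
set E := fun s : {ffun 'I_M -> V * Om} =>
  T - eps * n / 2 <= n * Defs.frac R live u s.
have failE s : ~~ E s
    = (\sum_(i < M) (rr_hit (s i))%:R < M%:R * (T / n - eps / 2)).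
  rewrite /E -ltNge frac_count.
  have -> : T - eps * n / 2 = n * ((M%:R * (T / n - eps / 2)) / M%:R).
    by field; rewrite !gt_eqF.
  by rewrite ltr_pM2l // ltr_pM2r // invr_gt0.
have total := @sum_prod_pmf _ _ _ rr_pmf_sum1 M.
rewrite (bigID E) /= in total.
have -> : \sum_(s | E s) sample_prob P s
    = 1 - \sum_(s | ~~ E s) sample_prob P s.
  by rewrite -total addrK.
rewrite lerD2l lerN2 (eq_bigl _ _ failE).
have -> : M%:R * eps ^+ 2 * n / (8 * T)
    = M%:R * (eps / 2) ^+ 2 / (2 * (T / n)).
  by field; rewrite !gt_eqF.
apply: (@bernoulli_lower_tail _ _ _ rr_hit rr_pmf_ge0 rr_pmf_sum1);
  rewrite ?divr_gt0 //.
by rewrite rr_hit_mean ler_pM2r ?invr_gt0.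
Qed.

End RRSampling.

Section IndependentCascade.
Variables (R : realType) (V : finType) (w : V -> V -> R).
Hypothesis w_prob : forall x y, 0 <= w x y <= 1.

Lemma IC_prob_ge0 L : 0 <= IC_prob w L.
Proof.
apply: prodr_ge0 => e _; have /andP[w0 w1] := w_prob e.1 e.2.
by case: (L e); rewrite ?subr_ge0.
Qed.

Lemma IC_prob_sum1 : \sum_L IC_prob w L = 1.
Proof.
rewrite /IC_prob -(bigA_distr_bigA (fun e (l : bool) =>
  if l then w e.1 e.2 else 1 - w e.1 e.2)) /=.
by rewrite big1 // => e _; rewrite big_bool /= addrC subrK.
Qed.

End IndependentCascade.

Section LinearThreshold.
Variables (R : realType) (V : finType) (w : V -> V -> R) (wself : V -> R).
Hypothesis w_ge0 : forall x y, 0 <= w x y.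
Hypothesis wself_ge0 : forall v, 0 <= wself v.
Hypothesis W_gt0 : forall v, 0 < LT_W w wself v.

Let choice_weight (v : V) (o : option V) : R :=
  if o is Some x then w x v else wself v.

Lemma LT_probE c :
  LT_prob w wself c = \prod_v (choice_weight v (c v) / LT_W w wself v).
Proof. by rewrite /LT_prob; apply: eq_bigr => v _; case: (c v). Qed.

Lemma LT_prob_ge0 c : 0 <= LT_prob w wself c.
Proof.
rewrite LT_probE; apply: prodr_ge0 => v _.
by rewrite divr_ge0 ?(ltW (W_gt0 v)) //; case: (c v) => [x|] /=.
Qed.

Lemma LT_prob_sum1 : \sum_c LT_prob w wself c = 1.
Proof.
under eq_bigr do rewrite LT_probE.
rewrite -(bigA_distr_bigA (fun v o => choice_weight v o / LT_W w wself v)) /=.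
rewrite big1 // => v _; rewrite -mulr_suml (bigD1 None) //=.
rewrite (reindex_omap Some id (P := fun o => o != None)) //=; last by case.
rewrite (eq_bigl xpredT) => [|x]; last by rewrite eqxx.
by rewrite -[wself v + _]/(LT_W w wself v) mulfV // gt_eqF.
Qed.

End LinearThreshold.

Theorem lemma5p1 (R : realType) (V : finType) (w : V -> V -> R) (wself : V -> R)
    (T eps : R) (M : nat) (u : V) :
  0 < T -> 0 < eps -> (0 < M)%N ->
  ((forall x y, 0 <= w x y <= 1) ->
     rr_lower_tail_claim (IC_prob w) (@IC_live V) T eps M u) /\
  ((forall x y, 0 <= w x y) -> (forall v, 0 <= wself v) ->
   (forall v, 0 < LT_W w wself v) ->
     rr_lower_tail_claim (LT_prob w wself) (@LT_live V) T eps M u).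
Proof.
move=> T0 eps0 M0; split => [w_prob | w_ge0 wself_ge0 W_gt0].
- apply: rr_lower_tail => //; [exact: IC_prob_ge0 | exact: IC_prob_sum1].
- apply: rr_lower_tail => //; [exact: LT_prob_ge0 | exact: LT_prob_sum1].
Qed.
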